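(* Let $a,b,c$ be nonnegative integers. Then the game $(a,b)^*$ (two-pile \textsc{Nim} with a pass) has Grundy value $c$ if and only if the game $(a,b,c)^*$ (three-pile \textsc{Nim} with a pass) is a $\mathcal{P}$-position.
   Context: All games are finite impartial games under normal play. A game is identified with its set of options; $\mathbf{E}$ denotes the game with no options. Nimbers: $*0\equiv\mathbf{E}$, $*n\equiv\{*0,\dots,*(n-1)\}$. The disjunctive sum is $G+H\equiv\{g+H,\ G+h\}$. The \textsc{Nim} position $(a_1,\dots,a_k)$ is $*a_1+\dots+*a_k$. For a game $G$, the game with a pass $G^*$ is defined recursively: $G^*\equiv\mathbf{E}$ if $G\equiv\mathbf{E}$, and otherwise $G^*\equiv\{G,\ g^*\}$ where $g$ ranges over the options of $G$ (i.e. once in the game a player may ''pass'', moving to $G$ itself, but only while some move remains). A $\mathcal{P}$-position is a game all of whose options are $\mathcal{N}$-positions; an $\mathcal{N}$-position has some option that is a $\mathcal{P}$-position. The Grundy value of a game $G$ is the unique $c$ such that $G+*c$ is a $\mathcal{P}$-position (equivalently, recursively the mex of the Grundy values of its options). *)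

From mathcomp Require Import all_boot.
Set Implicit Arguments. Unset Strict Implicit. Unset Printing Implicit Defensive.

Inductive game : Type := Game : seq game -> game.

Definition E : game := Game [::].

Definition options (g : game) : seq game := let: Game l := g in l.

(* nims n = [:: *0; ...; *(n-1)] ;  *n = Game (nims n) *)
Fixpoint nims (n : nat) : seq game :=
  match n with
  | 0 => [::]
  | n'.+1 => rcons (nims n') (Game (nims n'))
  end.

Definition nimber (n : nat) : game := Game (nims n).

(* Disjunctive sum: G + H = { g + H, G + h }. *)
Fixpoint gsum (g h : game) {struct g} : game :=
  match g with
  | Game l1 =>
    let fix sr (h : game) : game :=
      match h with
      | Game l2 => Game (map (fun x => gsum x h) l1 ++ map sr l2)
      end in sr h
  end.

(* Game with a pass: E^* = E, G^* = {G, g^*} otherwise. *)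
Fixpoint gpass (g : game) : game :=
  match g with
  | Game l =>
    match l with
    | [::] => Game [::]
    | _ :: _ => Game (Game l :: map gpass l)
    end
  end.

Fixpoint isP (g : game) : bool :=
  match g with
  | Game l => all (fun h => ~~ isP h) l
  end.

Definition mex (s : seq nat) : nat := find (fun n => n \notin s) (iota 0 (size s).+1).

Fixpoint grundy (g : game) : nat :=
  match g with
  | Game l => mex (map grundy l)
  end.

Definition nim2 (a b : nat) : game := gsum (nimber a) (nimber b).
Definition nim3 (a b c : nat) : game := gsum (gsum (nimber a) (nimber b)) (nimber c).

Example ex1 : grundy (nimber 5) = 5. Proof. by []. Qed.
Example ex2 : grundy (nim2 3 5) = 6. Proof. by []. Qed.
Example ex3 : isP (nim3 1 2 3). Proof. by []. Qed.
Example ex4 : gpass E = E. Proof. by []. Qed.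

From mathcomp Require Import all_boot.
From Stdlib Require List.

(* The proof rests on two general facts about an arbitrary game G and a
   nimber *c, both proved by induction on G and, inside, strong induction
   on c:
   - Sprague-Grundy (grundy_nimsumP): G + *c is a P-position iff the
     Grundy value of G is c.  The options of G + *c are the g + *c (which
     are N-positions iff grundy g <> c) and the G + *c' with c' < c (which
     are N-positions iff grundy G <> c'), so this amounts to the
     characterization of the mex.
   - Passing commutes with adding a nimber (isP_pass_nimsum): (G + *c)^*
     and G^* + *c are simultaneously P-positions, because their options
     match up pairwise, up to the same property for smaller positions.
   The theorem follows: (a,b,c)^* = ((a,b) + *c)^* is a P-position iff
   (a,b)^* + *c is, iff the Grundy value of (a,b)^* is c. *)

Lemma game_ind2 (P : game -> Prop) :
  (forall l, List.Forall P l -> P (Game l)) -> forall g, P g.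
Proof.
move=> IH; fix F 1 => -[l]; apply: IH.
by elim: l => [|x l IHl]; constructor; [exact: F | exact: IHl].
Qed.

Lemma eq_all_Forall (T : Type) (p q : pred T) (s : seq T) :
  List.Forall (fun x => p x = q x) s -> all p s = all q s.
Proof. by elim=> [|x s' pq_x _ IH] //=; rewrite pq_x IH. Qed.

Lemma iotaSr c : iota 0 c.+1 = rcons (iota 0 c) c.
Proof. by rewrite -addn1 iotaD cats1. Qed.

Lemma nimsE c : nims c = map nimber (iota 0 c).
Proof. by elim: c => [//|c IH]; rewrite iotaSr map_rcons -IH. Qed.

Lemma gsum_nimberE g c : gsum g (nimber c) =
  Game (map (fun x => gsum x (nimber c)) (options g) ++
        map (fun c' => gsum g (nimber c')) (iota 0 c)).
Proof. by case: g => l; rewrite /nimber nimsE /= -map_comp. Qed.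

Lemma gpassE h : 0 < size (options h) ->
  gpass h = Game (h :: map gpass (options h)).
Proof. by case: h => [[|y s]]. Qed.

Lemma isPE l : isP (Game l) = all (fun h => ~~ isP h) l.
Proof. by []. Qed.

Lemma mex_notin s : mex s \notin s.
Proof.
rewrite /mex.
have has_gap : has (fun n => n \notin s) (iota 0 (size s).+1).
  apply/hasPn => /= full.
  have sub : {subset iota 0 (size s).+1 <= s} by move=> x /full /negPn.
  have := uniq_leq_size (iota_uniq 0 (size s).+1) sub.
  by rewrite size_iota ltnn.
have := nth_find 0 has_gap.
by rewrite nth_iota ?add0n //; move: has_gap; rewrite has_find size_iota.
Qed.

Lemma mex_lt s n : n < mex s -> n \in s.
Proof.
move=> lt_n_mex; have := before_find 0 lt_n_mex.
have le_mex := find_size (fun n => n \notin s) (iota 0 (size s).+1).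
rewrite size_iota in le_mex.
by rewrite nth_iota ?add0n => [/negPn|]; last exact: leq_trans le_mex.
Qed.

Lemma mex_eq s c : (mex s == c) = (c \notin s) && (c <= mex s).
Proof.
apply/eqP/andP => [<-|[c_notin le_c]]; first by split; [exact: mex_notin|].
apply/eqP; rewrite eqn_leq le_c andbT leqNgt.
by apply: contra c_notin => /mex_lt.
Qed.

Lemma all_iota_neq m c : all (fun c' => m != c') (iota 0 c) = (c <= m).
Proof.
elim: c => [//|c IH].
by rewrite iotaSr all_rcons IH andbC; case: ltngtP.
Qed.

Lemma grundy_nimsumP g c : isP (gsum g (nimber c)) = (grundy g == c).
Proof.
elim/game_ind2: g c => l IHl c; elim/ltn_ind: c => c IHc.
rewrite gsum_nimberE /= all_cat !all_map.
have -> : all (preim (fun x => gsum x (nimber c)) (fun h => ~~ isP h)) l =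
          (c \notin map grundy l).
  rewrite -has_pred1 has_map -all_predC.
  apply: eq_all_Forall; apply: List.Forall_impl IHl => x IHx /=.
  by rewrite IHx.
have -> : all (preim (fun c' => gsum (Game l) (nimber c')) (fun h => ~~ isP h))
            (iota 0 c) = all (fun c' => grundy (Game l) != c') (iota 0 c).
  apply: eq_in_all => c'; rewrite mem_iota add0n => /andP[_ lt_c'c].
  exact: (congr1 negb (IHc c' lt_c'c)).
by rewrite all_iota_neq mex_eq.
Qed.

(* Passing commutes with adding a nimber, as far as P-positions go: the
   options of (G + *c)^* are G + *c, the (g + *c)^* and the (G + *c')^*,
   those of G^* + *c are G + *c, the g^* + *c and the G^* + *c'. *)
Lemma isP_pass_nimsum G c :
  isP (gpass (gsum G (nimber c))) = isP (gsum (gpass G) (nimber c)).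
Proof.
elim/game_ind2: G c => -[|x l] IHl c.
  (* G = E: both sides are *c. *)
  by rewrite grundy_nimsumP; case: c => [//|c]; rewrite gsum_nimberE.
elim/ltn_ind: c => c IHc.
set xl := x :: l in IHl IHc *; set G := Game xl in IHc *.
have opts : options (gsum G (nimber c)) =
  map (fun y => gsum y (nimber c)) xl ++
  map (fun c' => gsum G (nimber c')) (iota 0 c) by rewrite gsum_nimberE.
have pass_opts : options (gpass G) = G :: map gpass xl by [].
have has_move : 0 < size (options (gsum G (nimber c))) by rewrite opts size_cat.
clearbody G xl.
rewrite (gpassE _ has_move) [gsum (gpass G) _]gsum_nimberE !isPE opts pass_opts.
rewrite map_cons cat_cons [all _ (_ :: _)]/= [all _ (_ :: _)]/= !map_cat !all_cat !all_map.
(* Both games have the option G + *c (the pass, resp. the pass in the first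
   summand); the remaining options correspond to each other. *)
congr (_ && (_ && _)).
  apply: eq_all_Forall; apply: List.Forall_impl IHl => y IHy /=.
  by rewrite IHy.
apply: eq_in_all => c'; rewrite mem_iota add0n => /andP[_ lt_c'c].
exact: (congr1 negb (IHc c' lt_c'c)).
Qed.

Theorem mainTheorem8 (a b c : nat) :
  grundy (gpass (nim2 a b)) = c <-> isP (gpass (nim3 a b c)).
Proof.
rewrite /nim3 -/(nim2 a b) isP_pass_nimsum grundy_nimsumP.
by split=> /eqP.
Qed.
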